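(* Let $p_1<\dots<p_m$ be real numbers with $m\ge3$, let $M=\max_{i,j}|p_i-p_j|$, and define $M_0^2=\sum_{1\le i<j\le m}(p_j-p_i)^2$ and $M_{k+1}^2=\big(\sum_{1\le i<j\le m}\frac{1}{(p_i-p_j)^2-M_{k}^2}\big)^{-1}+M_{k}^2$ for $k\ge0$. Then for every $k\ge0$, $$0<\frac{2}{m(m-1)}\Big(1-\frac{M^2}{M_k^2}\Big)<1-\frac{M_{k+1}^2}{M_k^2}<1-\frac{M^2}{M_k^2}.$$ *)

From HB Require Import structures.
From mathcomp Require Import all_boot all_order all_algebra.
From mathcomp Require Import reals.
Set Implicit Arguments. Unset Strict Implicit. Unset Printing Implicit Defensive.
Import Order.TTheory GRing.Theory Num.Theory.
Local Open Scope ring_scope.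

(* M = max_{i,j} |p_i - p_j| (all terms are >= 0, so 0 is a neutral start). *)
Definition Mmax (R : realType) (m : nat) (p : 'I_m -> R) : R :=
  \big[Num.max/0]_(i < m) \big[Num.max/0]_(j < m) `|p i - p j|.

Fixpoint Msq (R : realType) (m : nat) (p : 'I_m -> R) (k : nat) : R :=
  match k with
  | 0%N => \sum_(i < m) \sum_(j < m | (i < j)%N) (p j - p i) ^+ 2
  | k'.+1 =>
      (\sum_(i < m) \sum_(j < m | (i < j)%N)
          ((p i - p j) ^+ 2 - Msq p k')^-1)^-1 + Msq p k'
  end.

(** Write [d_ij = (p_i - p_j)^2] and [D = M^2 = (p_m - p_1)^2], so that every
    [d_ij <= D] with equality at the extreme pair and strict inequality at
    [(1,2)] since [m >= 3].  For [S > D] let [T(S) = sum_(i<j) 1/(S - d_ij)];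
    then [1/(S - D) < T(S) < C(m,2)/(S - D)], and the recursion reads
    [M_(k+1)^2 = M_k^2 - 1/T(M_k^2)].  By induction [D < M_k^2] for all [k],
    and the three inequalities become, after dividing by [M_k^2], the bounds
    [(S - D)/C(m,2) < 1/T(S) < S - D] at [S = M_k^2]. *)
From HB Require Import structures.
From mathcomp Require Import all_boot all_order all_algebra.
From mathcomp Require Import reals ring lra zify.
Import Order.TTheory GRing.Theory Num.Theory.
Set Implicit Arguments. Unset Strict Implicit. Unset Printing Implicit Defensive.
Local Open Scope ring_scope.

Lemma bin2_double m : ('C(m, 2) * 2 = m * (m - 1))%N.
Proof.
elim: m => [|m IH] //; rewrite binS bin1 mulnDl IH.
by case: m {IH} => // m; rewrite !subn1 /=; nia.
Qed.

Lemma two_div_natr_bin2 (R : numFieldType) (m : nat) :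
  2 / (m * (m - 1))%:R = ('C(m, 2)%:R)^-1 :> R.
Proof. by rewrite -bin2_double natrM invfM mulrCA divff ?mulr1 ?pnatr_eq0. Qed.

Section PairSums.
Variables (R : numDomainType) (m : nat).

Definition sum_pairs (F : 'I_m -> 'I_m -> R) : R :=
  \sum_(i < m) \sum_(j < m | (i < j)%N) F i j.

Lemma sumr_const_ord_gt (i : 'I_m) (x : R) :
  \sum_(j < m | (i < j)%N) x = x *+ (m - i.+1).
Proof.
rewrite -(big_mkord (fun j => (i < j)%N) (fun _ => x)).
rewrite (big_cat_nat _ (n := i.+1)) ?ltn_ord //= big_nat_cond big1 ?add0r.
  rewrite -sumr_const_nat big_nat_cond [RHS]big_nat_cond.
  by apply: eq_bigl => j; rewrite andbT; case/boolP: (i.+1 <= j < m)%N => // /andP[].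
by move=> j /andP[/andP[_ lt_ji] le_ij]; move: (leq_trans le_ij lt_ji); rewrite ltnn.
Qed.

Lemma sum_pairs_const (x : R) : sum_pairs (fun _ _ => x) = x *+ 'C(m, 2).
Proof.
rewrite /sum_pairs (eq_bigr (fun i : 'I_m => x *+ (m - i.+1))) => [|i _].
  by rewrite sumrMnr -bin2_sum big_rev_mkord subn0.
exact: sumr_const_ord_gt.
Qed.

Lemma ler_sum_pairs_term (F : 'I_m -> 'I_m -> R) (i0 j0 : 'I_m) :
  (forall i j : 'I_m, (i < j)%N -> 0 <= F i j) -> (i0 < j0)%N ->
  F i0 j0 <= sum_pairs F.
Proof.
move=> F_ge0 lt_ij0; rewrite /sum_pairs (bigD1 i0) //= (bigD1 j0) //= -addrA lerDl.
apply: addr_ge0; first by apply: sumr_ge0 => j /andP[lt_i0j _]; apply: F_ge0.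
by apply: sumr_ge0 => i _; apply: sumr_ge0 => j; apply: F_ge0.
Qed.

Lemma ltr_sum_pairs (F G : 'I_m -> 'I_m -> R) (i0 j0 : 'I_m) :
  (forall i j : 'I_m, (i < j)%N -> F i j <= G i j) -> (i0 < j0)%N ->
  F i0 j0 < G i0 j0 -> sum_pairs F < sum_pairs G.
Proof.
move=> leFG lt_ij0 ltFG0; rewrite /sum_pairs (bigD1 i0) //= [X in _ < X](bigD1 i0) //=.
apply: ltr_leD; last by apply: ler_sum => i _; apply: ler_sum => j; apply: leFG.
rewrite (bigD1 j0) //= [X in _ < X](bigD1 j0) //=; apply: ltr_leD => //.
by apply: ler_sum => j /andP[lt_i0j _]; apply: leFG.
Qed.

Lemma ltr_sum_pairs_term (F : 'I_m -> 'I_m -> R) (i0 j0 i1 j1 : 'I_m) :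
  (forall i j : 'I_m, (i < j)%N -> 0 < F i j) ->
  (i0 < j0)%N -> (i1 < j1)%N -> (i0, j0) != (i1, j1) ->
  F i0 j0 < sum_pairs F.
Proof.
move=> F_gt0 lt_ij0 lt_ij1 neq01.
pose G (i j : 'I_m) := if (i, j) == (i1, j1) then 0 else F i j.
have leGF (i j : 'I_m) : (i < j)%N -> G i j <= F i j.
  by move=> lt_ij; rewrite /G; case: ifP => _ //; exact/ltW/F_gt0.
apply: (@le_lt_trans _ _ (sum_pairs G)).
  have -> : F i0 j0 = G i0 j0 by rewrite /G (negPf neq01).
  apply: ler_sum_pairs_term => // i j lt_ij.
  by rewrite /G; case: ifP => _ //; exact/ltW/F_gt0.
by apply: (ltr_sum_pairs leGF lt_ij1); rewrite /G eqxx F_gt0.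
Qed.

End PairSums.

Definition inv_gap_sum (R : realType) (m : nat) (p : 'I_m -> R) (S : R) : R :=
  sum_pairs (fun i j => (S - (p i - p j) ^+ 2)^-1).

Lemma MsqS (R : realType) (m : nat) (p : 'I_m -> R) k :
  Msq p k.+1 = Msq p k - (inv_gap_sum p (Msq p k))^-1.
Proof.
rewrite /= addrC; congr (_ + _); rewrite -invrN; congr (_^-1).
rewrite /inv_gap_sum /sum_pairs -sumrN; apply: eq_bigr => i _.
by rewrite -sumrN; apply: eq_bigr => j _; rewrite -invrN opprB.
Qed.

Lemma Mmax_nondecreasing (R : realType) (n : nat) (p : 'I_n.+1 -> R) :
  (forall i j : 'I_n.+1, (i <= j)%N -> p i <= p j) ->
  Mmax p = p ord_max - p ord0.
Proof.
move=> p_homo; have p_ge_first i : p ord0 <= p i by apply: p_homo.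
have p_le_last i : p i <= p ord_max by apply: p_homo; rewrite -ltnS.
apply/eqP; rewrite eq_le; apply/andP; split.
  have span_ge0 : 0 <= p ord_max - p ord0 by rewrite subr_ge0.
  pose le_span x := x <= p ord_max - p ord0.
  have le_span_max x y : le_span x -> le_span y -> le_span (Num.max x y).
    by rewrite /le_span ge_max => -> ->.
  apply: (big_ind le_span) => // i _; apply: (big_ind le_span) => // j _.
  have := p_ge_first i; have := p_le_last i; have := p_ge_first j; have := p_le_last j.
  by rewrite /le_span ler_norml => *; apply/andP; split; lra.
rewrite /Mmax (bigD1 ord_max) //= le_max; apply/orP; left.
rewrite (bigD1 ord0) //= le_max; apply/orP; left.
by rewrite ger0_norm // subr_ge0.
Qed.

Lemma contraction_bounds (R : realFieldType) (n : nat) (D S t : R) :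
  0 <= D -> D < S -> (0 < n)%N ->
  (S - D)^-1 < t -> t < (S - D)^-1 *+ n ->
  [/\ 0 < n%:R^-1 * (1 - D / S),
      n%:R^-1 * (1 - D / S) < 1 - (S - t^-1) / S
    & 1 - (S - t^-1) / S < 1 - D / S].
Proof.
move=> D_ge0 lt_DS n_gt0 lt_t lt_tn.
have S_gt0 : 0 < S by exact: le_lt_trans lt_DS.
have gap_gt0 : 0 < S - D by rewrite subr_gt0.
have t_gt0 : 0 < t by apply: lt_trans lt_t; rewrite invr_gt0.
have n_gt0R : 0 < n%:R :> R by rewrite ltr0n.
have -> : 1 - (S - t^-1) / S = t^-1 / S by field; rewrite !lt0r_neq0.
have -> : n%:R^-1 * (1 - D / S) = ((S - D) / n%:R) / S by field; rewrite !lt0r_neq0.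
have -> : 1 - D / S = (S - D) / S by field; rewrite !lt0r_neq0.
rewrite !ltr_pM2r ?invr_gt0 //; split.
- by rewrite !mulr_gt0 ?invr_gt0.
- rewrite -[_ / n%:R]invrK ltf_pV2 ?posrE ?invr_gt0 ?divr_gt0 //.
  by rewrite invf_div mulrC mulr_natr.
- by rewrite -[S - D]invrK ltf_pV2 ?posrE ?invr_gt0.
Qed.

Section IncreasingPoints.
Variables (R : realType) (n : nat) (p : 'I_n.+3 -> R).
Hypothesis p_incr : forall i j : 'I_n.+3, (i < j)%N -> p i < p j.

Let a : 'I_n.+3 := ord0.
Let b : 'I_n.+3 := ord_max.
Let c : 'I_n.+3 := Ordinal (isT : (1 < n.+3)%N).
Let D := (p b - p a) ^+ 2.

Lemma p_nondecreasing (i j : 'I_n.+3) : (i <= j)%N -> p i <= p j.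
Proof. by rewrite leq_eqVlt => /orP[/eqP/val_inj ->|/p_incr/ltW]. Qed.

Lemma Mmax_sqr : Mmax p ^+ 2 = D.
Proof. by rewrite (Mmax_nondecreasing p_nondecreasing). Qed.

Lemma sqr_diff_le_span (i j : 'I_n.+3) : (p i - p j) ^+ 2 <= D.
Proof.
have := @p_nondecreasing a i (leq0n i); have := @p_nondecreasing a j (leq0n j).
have := @p_nondecreasing i b (leq_ord i); have := @p_nondecreasing j b (leq_ord j).
by rewrite /D /a /b => *; nra.
Qed.

Lemma sqr_diff_gt0 (i j : 'I_n.+3) : (i < j)%N -> 0 < (p i - p j) ^+ 2.
Proof. by move=> /p_incr lt_pij; rewrite exprn_even_gt0 //= subr_eq0 lt_eqF. Qed.

Lemma span_gt0 : 0 < D.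
Proof. by rewrite /D -sqrrN opprB sqr_diff_gt0. Qed.

Lemma inv_gap_sum_bounds S : D < S ->
  (S - D)^-1 < inv_gap_sum p S < (S - D)^-1 *+ 'C(n.+3, 2).
Proof.
move=> lt_DS; have gap_gt0 i j : 0 < S - (p i - p j) ^+ 2.
  by rewrite subr_gt0 (le_lt_trans (sqr_diff_le_span i j)).
have lt_ac : (p a - p c) ^+ 2 < D.
  have := p_incr (isT : (a < c)%N); have := p_incr (isT : (c < b)%N).
  by rewrite /D => *; nra.
apply/andP; split.
  have -> : (S - D)^-1 = (S - (p a - p b) ^+ 2)^-1 by rewrite /D -sqrrN opprB.
  by apply: (@ltr_sum_pairs_term _ _ _ a b a c) => // i j _; rewrite invr_gt0.
rewrite -sum_pairs_const (@ltr_sum_pairs _ _ _ _ a c) //.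
  by move=> i j _; rewrite lef_pV2 ?posrE ?gap_gt0 ?subr_gt0 // lerB // sqr_diff_le_span.
by rewrite ltf_pV2 ?posrE ?gap_gt0 ?subr_gt0 //; lra.
Qed.

Lemma Msq_gt_span k : D < Msq p k.
Proof.
elim: k => [|k IH].
  apply: (@ltr_sum_pairs_term _ _ (fun i j => (p j - p i) ^+ 2) a b a c) => // i j.
  by rewrite -sqrrN opprB; apply: sqr_diff_gt0.
have /andP[lt_inv _] := inv_gap_sum_bounds IH.
have gap_gt0 : 0 < Msq p k - D by rewrite subr_gt0.
have inv_gap_sum_gt0 : 0 < inv_gap_sum p (Msq p k).
  by apply: lt_trans lt_inv; rewrite invr_gt0.
have : (inv_gap_sum p (Msq p k))^-1 < Msq p k - D.
  by rewrite -[Msq p k - D]invrK ltf_pV2 ?posrE ?invr_gt0.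
by rewrite MsqS; lra.
Qed.

End IncreasingPoints.

Theorem mainTheorem9 (R : realType) (m : nat) (p : 'I_m -> R)
  (hm : (3 <= m)%N)
  (hp : forall i j : 'I_m, (i < j)%N -> p i < p j) (k : nat) :
  0 < 2 / (m * (m - 1))%:R * (1 - Mmax p ^+ 2 / Msq p k) /\
  2 / (m * (m - 1))%:R * (1 - Mmax p ^+ 2 / Msq p k) < 1 - Msq p k.+1 / Msq p k /\
  1 - Msq p k.+1 / Msq p k < 1 - Mmax p ^+ 2 / Msq p k.
Proof.
case: m p hp hm => [|[|[|n]]] p hp // _.
have lt_DS := Msq_gt_span hp k.
have /andP[lt_inv lt_invn] := inv_gap_sum_bounds hp lt_DS.
have bin2_gt0 : (0 < 'C(n.+3, 2))%N by rewrite bin_gt0.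
have [] := contraction_bounds (ltW (span_gt0 hp)) lt_DS bin2_gt0 lt_inv lt_invn.
by rewrite two_div_natr_bin2 Mmax_sqr // MsqS.
Qed.
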